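(* Let $\omega(a,\beta)$ be any function with $W^{(n)}(a,\beta)\le\omega(a,\beta)$ whenever $W^{(n)}(a,\beta)$ is defined. Then for $a,\rho\in(0,1)$ with $2^na\in\mathbb Z$, $\mathbf{MaxStab}_\Phi(a)\le\Upsilon_\rho(a)$, where $$\Upsilon_\rho(a):=\sup_{\beta,P_{Z|SX}}\mathbb E[\Phi(a+\rho Z)]$$ subject to $0\le\beta\le\min\{a,1-a\}$, $0\le a+\rho Z\le1$ a.s., $\mathbb EZ=0$, $\mathbb E[XZ]=\beta$, $\mathbb E[Z^2]\le(1-\rho)\omega(a,\beta)+\rho\mathbb E[SZ]$, where $(S,X,Z)\sim P_{SX}P_{Z|SX}$ with $P_{SX}(-a,-1)=\frac{1-a+\beta}2$, $P_{SX}(-a,1)=\frac{1-a-\beta}2$, $P_{SX}(1-a,-1)=\frac{a-\beta}2$, $P_{SX}(1-a,1)=\frac{a+\beta}2$, and the supremum is over $\beta$ and conditional probability mass functions $P_{Z|SX}$ of a real random variable $Z$.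
   Context: $\mathbf X$ uniform on $\{-1,1\}^n$; $\mathbf Y$ obtained by independently flipping each coordinate of $\mathbf X$ with probability $(1-\rho)/2$; $T_\rho f(\mathbf x)=\mathbb E[f(\mathbf Y)\mid\mathbf X=\mathbf x]$; $\Phi:[0,1]\to\mathbb R$ continuous and strictly convex; $\mathbf{MaxStab}_\Phi(a)=\max\{\mathbb E[\Phi(T_\rho f(\mathbf X))]:f:\{-1,1\}^n\to\{0,1\},\mathbb Ef(\mathbf X)=a\}$. For $f:\{-1,1\}^n\to\mathbb R$, $\hat f_{\{i\}}=\mathbb E[f(\mathbf X)X_i]$, $\mathbf W_1[f]=\sum_i\hat f_{\{i\}}^2$, and $W^{(n)}(a,\beta):=\max\{\mathbf W_1[f]:f\text{ Boolean},\ \mathbb Ef=a,\ \max_{i}|\hat f_{\{i\}}|=\beta\}$. *)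

From HB Require Import structures.
From mathcomp Require Import all_boot all_order all_algebra.
From mathcomp Require Import all_classical all_reals all_analysis.
Set Implicit Arguments. Unset Strict Implicit. Unset Printing Implicit Defensive.
Import Order.TTheory GRing.Theory Num.Theory numFieldNormedType.Exports.
Local Open Scope classical_set_scope.
Local Open Scope ring_scope.

Section Defs.
Variable R : realType.

(* The cube {-1,1}^n: a point is a finite function 'I_n -> bool,
   coordinate value  spm b = 1 if b, -1 otherwise. *)
Definition cube (n : nat) := {ffun 'I_n -> bool}.
Definition spm (b : bool) : R := if b then 1 else -1.

Definition Eunif (n : nat) (g : cube n -> R) : R :=
  (2%:R ^+ n)^-1 * \sum_(x : cube n) g x.

(* Boolean function f : {-1,1}^n -> {0,1}, encoded as cube n -> bool,
   with real value 1 for true and 0 for false. *)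
Definition b01 (b : bool) : R := if b then 1 else 0.

Definition noise_kernel (n : nat) (rho : R) (x y : cube n) : R :=
  \prod_(i < n) (if x i == y i then (1 + rho) / 2 else (1 - rho) / 2).

Definition Trho (n : nat) (rho : R) (f : cube n -> R) (x : cube n) : R :=
  \sum_(y : cube n) noise_kernel rho x y * f y.

Definition fhat1 (n : nat) (f : cube n -> R) (i : 'I_n) : R :=
  Eunif (fun x => f x * spm (x i)).
Definition W1 (n : nat) (f : cube n -> R) : R := \sum_(i < n) fhat1 f i ^+ 2.
Definition maxabs_hat (n : nat) (f : cube n -> R) : R :=
  \big[Num.max/0]_(i < n) `|fhat1 f i|.

Definition boolR (n : nat) (f : cube n -> bool) : cube n -> R := fun x => b01 (f x).

Definition Wfeas (n : nat) (a beta : R) (f : cube n -> bool) : bool :=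
  (Eunif (boolR f) == a) && (maxabs_hat (boolR f) == beta).

Definition W_defined (n : nat) (a beta : R) : Prop :=
  exists f : {ffun cube n -> bool}, Wfeas a beta f.

(* W^(n)(a,beta): maximum of W1 over the (finite) constraint set; since W1 >= 0
   the default 0 is harmless when the set is nonempty. *)
Definition Wn (n : nat) (a beta : R) : R :=
  \big[Num.max/0]_(f : {ffun cube n -> bool} | Wfeas a beta f) W1 (boolR f).

(* MaxStab_Phi(a), as an extended real (max of a finite set, -oo if empty). *)
Definition MaxStab (n : nat) (rho : R) (Phi : R -> R) (a : R) : \bar R :=
  \big[Order.max/-oo%E]_(f : {ffun cube n -> bool} | Eunif (boolR f) == a)
     (Eunif (fun x => Phi (Trho rho (boolR f) x)))%:E.

(* The four-point law P_{SX}: index sx = (bs, bx), with S = 1-a if bs else -a,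
   X = 1 if bx else -1. *)
Definition Sval (a : R) (sx : bool * bool) : R := if sx.1 then 1 - a else - a.
Definition Xval (sx : bool * bool) : R := spm sx.2.
Definition PSX (a beta : R) (sx : bool * bool) : R :=
  match sx with
  | (false, false) => (1 - a + beta) / 2
  | (false, true)  => (1 - a - beta) / 2
  | (true, false)  => (a - beta) / 2
  | (true, true)   => (a + beta) / 2
  end.

(* A conditional pmf P_{Z|SX} is given, for each of the four (s,x), by a
   countable family of atoms z sx k with masses p sx k (k : nat). *)
Definition is_cond_pmf (p : bool * bool -> nat -> R) : Prop :=
  forall sx, (forall k, 0 <= p sx k) /\ (series (p sx) @ \oo --> (1 : R)).

Definition Ejoint (a beta : R) (z p : bool * bool -> nat -> R)
    (g : R -> R -> R -> R) : R :=
  \sum_(sx : bool * bool)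
     PSX a beta sx * limn (series (fun k => p sx k * g (Sval a sx) (Xval sx) (z sx k))).

Definition Ufeas (rho : R) (omega : R -> R -> R) (a beta : R)
    (z p : bool * bool -> nat -> R) : Prop :=
  [/\ 0 <= beta <= Num.min a (1 - a),
      is_cond_pmf p &
     [/\
      (* 0 <= a + rho Z <= 1 almost surely *)
      (forall sx k, 0 < PSX a beta sx * p sx k ->
          0 <= a + rho * z sx k <= 1),
      Ejoint a beta z p (fun _ _ zz => zz) = 0,
      Ejoint a beta z p (fun _ x zz => x * zz) = beta &
      Ejoint a beta z p (fun _ _ zz => zz ^+ 2)
        <= (1 - rho) * omega a beta + rho * Ejoint a beta z p (fun s _ zz => s * zz)]].

Definition Upsilon (rho : R) (Phi : R -> R) (omega : R -> R -> R) (a : R) : \bar R :=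
  ereal_sup [set r : \bar R | exists beta (z p : bool * bool -> nat -> R),
     Ufeas rho omega a beta z p /\
     r = (Ejoint a beta z p (fun _ _ zz => Phi (a + rho * zz)))%:E].

End Defs.

From HB Require Import structures.
From mathcomp Require Import all_boot all_order all_algebra.
From mathcomp Require Import all_classical all_reals all_analysis.
From mathcomp Require Import ring lra.
Set Implicit Arguments. Unset Strict Implicit. Unset Printing Implicit Defensive.
Import Order.TTheory GRing.Theory Num.Theory numFieldNormedType.Exports.
Local Open Scope classical_set_scope.
Local Open Scope ring_scope.

(* Fix a Boolean f of mean a and a coordinate i maximizing |f^(i)|, so that
   beta = |f^(i)|.  Put S = f - a, let X be the i-th coordinate oriented so
   that E[f X] = beta, and Z = T_rho S / rho, so that a + rho Z = T_rho f.
   Under the uniform measure (S, X) has law P_{SX}, and P_{Z|SX} is the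
   uniform law on each fiber of x |-> (f x, X x); hence E[Phi(T_rho f)] is
   the objective of Upsilon at a point (beta, P_{Z|SX}) that we show to be
   feasible.  The only nontrivial constraint is the second-moment bound,
   which follows from the Walsh expansion: T_rho multiplies the coefficient
   of chi_s by rho^|s|, and rho^(2|s|) <= rho^2 ((1 - rho) [|s| = 1] + rho^|s|). *)

Lemma damping_bound (R : realFieldType) (r m : R) (d : nat) :
  0 <= r <= 1 -> (0 < d)%N -> 0 <= m -> (d = 1%N -> 1 <= m) ->
  (r ^+ d) ^+ 2 <= r ^+ 2 * ((1 - r) * m + r ^+ d).
Proof.
move=> /andP[r0 r1] d0 m0 m1; have r1' : 0 <= 1 - r by rewrite subr_ge0.
have [d1|d2] := eqVneq d 1%N.
  rewrite d1 expr1 -subr_ge0.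
  have -> : r ^+ 2 * ((1 - r) * m + r) - r ^+ 2 = r ^+ 2 * (1 - r) * (m - 1) by ring.
  by rewrite !mulr_ge0 ?sqr_ge0 // subr_ge0 m1.
have rd : r ^+ d <= r ^+ 2 by apply: ler_wiXn2l => //; rewrite ltn_neqAle eq_sym d2 d0.
rewrite mulrDr -[X in X <= _]add0r expr2; apply: lerD.
  by rewrite !mulr_ge0 ?sqr_ge0.
by rewrite ler_wpM2r ?exprn_ge0.
Qed.

Section WalshFourier.
Variables (R : realType) (n : nat).

(* Subsets of the coordinates are encoded as points of the cube: [s i] says
   whether [i] belongs to [s].  [empty_set] is the empty set and [single i]
   the singleton {i}. *)
Definition empty_set : cube n := [ffun _ => false].
Definition single (i : 'I_n) : cube n := [ffun j => j == i].
Definition degree (s : cube n) : nat := #|[pred i | s i]|.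

Definition chi (s x : cube n) : R := \prod_i (if s i then spm R (x i) else 1).
Definition wgt (r : R) (s : cube n) : R := r ^+ degree s.
Definition hat (h : cube n -> R) (s : cube n) : R := Eunif (fun x => h x * chi s x).

Definition mass : R := (2%:R ^+ n)^-1.

Lemma mass_cube : mass * 2%:R ^+ n = 1.
Proof. by rewrite /mass mulVf // expf_neq0 // pnatr_eq0. Qed.

Lemma sum_cube_const (c : R) : \sum_(x : cube n) c = c * 2%:R ^+ n.
Proof. by rewrite sumr_const card_ffun card_bool card_ord -natrX mulr_natr. Qed.

Lemma Eunif_ext (h k : cube n -> R) : (forall x, h x = k x) -> Eunif h = Eunif k.
Proof. by move=> hk; rewrite /Eunif; congr (_ * _); apply: eq_bigr => x _. Qed.

Lemma EunifZ (c : R) (h : cube n -> R) : Eunif (fun x => c * h x) = c * Eunif h.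
Proof. by rewrite /Eunif -mulr_sumr mulrCA. Qed.

Lemma EunifB (h k : cube n -> R) : Eunif (fun x => h x - k x) = Eunif h - Eunif k.
Proof. by rewrite /Eunif sumrB mulrBr. Qed.

Lemma Eunif_cst (c : R) : Eunif (fun _ : cube n => c) = c.
Proof. by rewrite /Eunif sum_cube_const mulrCA -/mass mass_cube mulr1. Qed.

Lemma sum_cube_Eunif (h : cube n -> R) : \sum_x h x = Eunif h * 2%:R ^+ n.
Proof. by rewrite /Eunif -/mass mulrAC mass_cube mul1r. Qed.

Lemma sum_prod_coord (F : 'I_n -> bool -> R) :
  \sum_(x : cube n) \prod_i F i (x i) = \prod_i \sum_b F i b.
Proof. by rewrite bigA_distr_bigA. Qed.

Lemma wgtE (r : R) (s : cube n) : wgt r s = \prod_i (if s i then r else 1).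
Proof. by rewrite -big_mkcond prodr_const. Qed.

Lemma noise_kernel_walsh (r : R) (x y : cube n) :
  noise_kernel r x y = mass * \sum_s wgt r s * chi s x * chi s y.
Proof.
pose F i (e : bool) : R := if e then r * spm R (x i) * spm R (y i) else 1.
have coordE i : (if x i == y i then (1 + r) / 2 else (1 - r) / 2) = 2^-1 * \sum_e F i e.
  by rewrite big_bool /F /spm; case: (x i); case: (y i) => /=; field.
rewrite /noise_kernel (eq_bigr _ (fun i _ => coordE i)) big_split /= prodr_const.
rewrite card_ord exprVn -sum_prod_coord; congr (_ * _).
apply: eq_bigr => s _; rewrite wgtE /chi /F -!big_split /=; apply: eq_bigr => i _.
by case: (s i); rewrite ?mulr1.
Qed.

Lemma Eunif_mul_Trho (r : R) (h g : cube n -> R) :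
  Eunif (fun x => h x * Trho r g x) = \sum_s wgt r s * hat h s * hat g s.
Proof.
rewrite /Eunif /Trho /hat /Eunif -/mass.
pose G s x y := mass * mass * wgt r s * (h x * chi s x) * (g y * chi s y).
transitivity (\sum_x \sum_y \sum_s G s x y).
  rewrite mulr_sumr; apply: eq_bigr => x _; rewrite mulr_sumr mulr_sumr.
  apply: eq_bigr => y _; rewrite noise_kernel_walsh mulr_sumr big_distrl /=.
  by rewrite mulr_sumr mulr_sumr; apply: eq_bigr => s _; rewrite /G; ring.
transitivity (\sum_s \sum_x \sum_y G s x y).
  transitivity (\sum_x \sum_s \sum_y G s x y).
    by apply: eq_bigr => x _; exact: exchange_big.
  exact: exchange_big.
apply: eq_bigr => s _; rewrite !mulr_sumr.
under [RHS]eq_bigr do rewrite mulr_suml.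
rewrite [RHS]exchange_big; apply: eq_bigr => x _; apply: eq_bigr => y _.
by rewrite /G; ring.
Qed.

Lemma Trho_prod (r : R) (y : cube n) (H : 'I_n -> bool -> R) :
  Trho r (fun x => \prod_j H j (x j)) y =
  \prod_j \sum_b (if y j == b then (1 + r) / 2 else (1 - r) / 2) * H j b.
Proof.
rewrite /Trho /noise_kernel -sum_prod_coord.
by apply: eq_bigr => x _; rewrite big_split.
Qed.

Lemma Trho_chi (r : R) (s y : cube n) : Trho r (chi s) y = wgt r s * chi s y.
Proof.
rewrite /chi (Trho_prod r y (fun j b => if s j then spm R b else 1)) wgtE -big_split.
apply: eq_bigr => j _ /=.
by rewrite big_bool /spm; case: (s j); case: (y j) => /=; field.
Qed.

Lemma chi_empty (x : cube n) : chi empty_set x = 1.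
Proof. by rewrite /chi big1 // => j _; rewrite ffunE. Qed.

Lemma hat_empty (h : cube n -> R) : hat h empty_set = Eunif h.
Proof. by apply: Eunif_ext => x; rewrite chi_empty mulr1. Qed.

Lemma degree_empty : degree empty_set = 0%N.
Proof. by apply: eq_card0 => i; rewrite !inE ffunE. Qed.

Lemma chi_single (i : 'I_n) (x : cube n) : chi (single i) x = spm R (x i).
Proof.
rewrite /chi (bigD1 i) //= ffunE eqxx big1 ?mulr1 // => j /negbTE ji.
by rewrite ffunE ji.
Qed.

Lemma Eunif_spm (i : 'I_n) : Eunif (fun x => spm R (x i)) = 0.
Proof.
rewrite /Eunif (eq_bigr _ (fun x _ => esym (chi_single i x))) /chi.
rewrite (sum_prod_coord (fun j b => if single i j then spm R b else 1)).
by rewrite (bigD1 i) //= ffunE eqxx big_bool /spm /= subrr mul0r mulr0.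
Qed.

Lemma degree_single (i : 'I_n) : degree (single i) = 1%N.
Proof. by rewrite /degree (@fintype.eq_card1 _ i) // => j; rewrite !inE ffunE. Qed.

(* T_r is a Markov operator: its kernel is a probability distribution, so
   T_r commutes with constants and preserves [0, 1]-valued functions. *)
Lemma noise_kernel_sum1 (r : R) (y : cube n) : \sum_x noise_kernel r y x = 1.
Proof.
have := Trho_chi r empty_set y; rewrite /wgt degree_empty chi_empty expr0 mulr1.
by rewrite /Trho; under eq_bigr do rewrite chi_empty mulr1.
Qed.

Lemma Trho_subr (r c : R) (g : cube n -> R) (y : cube n) :
  Trho r (fun x => g x - c) y = Trho r g y - c.
Proof.
rewrite /Trho; under eq_bigr do rewrite mulrBr.
by rewrite sumrB -mulr_suml noise_kernel_sum1 mul1r.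
Qed.

Lemma Trho_unit_interval (r : R) (g : cube n -> R) (y : cube n) :
  -1 <= r <= 1 -> (forall x, 0 <= g x <= 1) -> 0 <= Trho r g y <= 1.
Proof.
move=> /andP[rN1 r1] g01.
have K0 x : 0 <= noise_kernel r y x.
  apply: prodr_ge0 => i _; case: ifP => _; apply: divr_ge0 => //.
    by rewrite -lerBlDl sub0r.
  by rewrite subr_ge0.
apply/andP; split.
  by apply: sumr_ge0 => x _; apply: mulr_ge0 => //; case/andP: (g01 x).
rewrite -(noise_kernel_sum1 r y); apply: ler_sum => x _.
by rewrite -[X in _ <= X]mulr1 ler_wpM2l //; case/andP: (g01 x).
Qed.

Lemma hat_Trho (r : R) (g : cube n -> R) (s : cube n) :
  hat (Trho r g) s = wgt r s * hat g s.
Proof.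
(* T_r is self-adjoint for the uniform measure. *)
have sym h : Eunif (fun x => h x * Trho r g x) = Eunif (fun x => g x * Trho r h x).
  by rewrite !Eunif_mul_Trho; apply: eq_bigr => t _; ring.
transitivity (Eunif (fun x => chi s x * Trho r g x)).
  by rewrite /hat /Eunif; congr (_ * _); apply: eq_bigr => x _; rewrite mulrC.
rewrite sym /hat /Eunif [RHS]mulrCA; congr (_ * _).
rewrite mulr_sumr; apply: eq_bigr => x _.
by rewrite Trho_chi; ring.
Qed.

Lemma Eunif_Trho_sq (r : R) (g : cube n -> R) :
  Eunif (fun x => Trho r g x ^+ 2) = \sum_s wgt r s ^+ 2 * hat g s ^+ 2.
Proof.
under eq_bigr do rewrite expr2.
rewrite -/(Eunif _) Eunif_mul_Trho; apply: eq_bigr => s _.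
by rewrite hat_Trho; ring.
Qed.

Lemma degree0_empty (s : cube n) : degree s = 0%N -> s = empty_set.
Proof.
move/card0_eq => s0; apply/ffunP => i; rewrite ffunE.
by have := s0 i; rewrite !inE.
Qed.

Lemma degree1_single (s : cube n) : degree s = 1%N -> exists i, s = single i.
Proof.
case/mem_card1 => i si; exists i; apply/ffunP => j; rewrite ffunE.
by have := si j; rewrite !inE.
Qed.

Lemma sum_single (F : cube n -> R) :
  \sum_i F (single i) = \sum_s (\sum_i (s == single i)%:R) * F s.
Proof.
under [RHS]eq_bigr do rewrite mulr_suml.
rewrite [RHS]exchange_big; apply: eq_bigr => i _.
by rewrite (bigD1 (single i)) //= eqxx mul1r big1 ?addr0 // => s /negbTE ->; rewrite mul0r.
Qed.

(* Fourier-side form of E[Z^2] <= (1-r) W1 + r E[SZ] for Z = T_r g / r: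
   for g of mean zero, E[(T_r g)^2] <= r^2 ((1 - r) W1[g] + E[g T_r g]). *)
Lemma Trho_sq_level_one (r : R) (g : cube n -> R) :
  0 <= r <= 1 -> hat g empty_set = 0 ->
  Eunif (fun x => Trho r g x ^+ 2) <=
  r ^+ 2 * ((1 - r) * \sum_i hat g (single i) ^+ 2 + Eunif (fun x => g x * Trho r g x)).
Proof.
move=> r01 g0; rewrite Eunif_Trho_sq Eunif_mul_Trho (sum_single (fun s => hat g s ^+ 2)).
rewrite mulr_sumr -big_split mulr_sumr /=; apply: ler_sum => s _.
have [/degree0_empty ->|deg_s] := eqVneq (degree s) 0%N.
  by rewrite g0 !(expr0n, mulr0, mul0r, addr0).
set m := \sum_i _; set h := hat g s.
have m1 : degree s = 1%N -> 1 <= m.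
  case/degree1_single => i si; rewrite /m si (bigD1 i) //= eqxx lerDl.
  by apply: sumr_ge0 => j _; rewrite ler0n.
have m0 : 0 <= m by apply: sumr_ge0 => i _; rewrite ler0n.
have deg_pos : (0 < degree s)%N by rewrite lt0n.
have := damping_bound r01 deg_pos m0 m1; rewrite /wgt => bound.
have -> : r ^+ 2 * ((1 - r) * (m * h ^+ 2) + r ^+ degree s * h * h) =
  r ^+ 2 * ((1 - r) * m + r ^+ degree s) * h ^+ 2 by ring.
by rewrite ler_wpM2r ?sqr_ge0.
Qed.

End WalshFourier.

Arguments chi {R n}.

Section FiniteLawAsPmf.
Variables (R : realType) (n : nat).

(* The uniform law on the cube, pushed forward by a labeling
   c : cube n -> bool * bool of the four atoms of P_{SX}, is realized as a
   conditional pmf P_{Z|SX}: given the label sx, the atom [point k] (the k-th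
   point of the cube) has mass 1/|c^-1(sx)| if c (point k) = sx.  An empty
   fiber gets the Dirac mass at k = 0, which is irrelevant since its label
   has probability zero. *)
Definition point (k : nat) : cube n := nth (empty_set n) (enum (cube n)) k.
Definition ncube : nat := size (enum (cube n)).
Definition fiber_card (c : cube n -> bool * bool) (sx : bool * bool) : nat :=
  #|[pred x | c x == sx]|.
Definition fiber_pmf (c : cube n -> bool * bool) (sx : bool * bool) (k : nat) : R :=
  if fiber_card c sx == 0%N then (k == 0%N)%:R
  else if (k < ncube)%N then (c (point k) == sx)%:R / (fiber_card c sx)%:R else 0.
Definition atoms (Z : cube n -> R) (sx : bool * bool) (k : nat) : R := Z (point k).

Lemma series_finite (u : nat -> R) (N : nat) : (forall k, (N <= k)%N -> u k = 0) ->
  series u @ \oo --> \sum_(k < N) u k.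
Proof.
move=> uz; apply: cvg_near_cst; near=> m.
have Nm : (N <= m)%N by near: m; exact: nbhs_infty_ge.
rewrite /series /= (@big_cat_nat _ _ _ N 0 m) //= big_mkord.
rewrite [X in _ + X]big1_seq ?addr0 // => k /andP[_].
by rewrite mem_index_iota => /andP[/uz].
Unshelve. all: by end_near.
Qed.

Lemma limn_series_finite (u : nat -> R) (N : nat) :
  (forall k, (N <= k)%N -> u k = 0) -> limn (series u) = \sum_(k < N) u k.
Proof. by move=> uz; apply: cvg_lim => //; exact: series_finite. Qed.

Lemma sum_points (F : cube n -> R) : \sum_(k < ncube) F (point k) = \sum_x F x.
Proof.
rewrite /point -(big_mkord xpredT (fun k => F (nth (empty_set n) (enum (cube n)) k))).
by rewrite -(big_nth (empty_set n) xpredT F) big_enum.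
Qed.

Lemma sum_fiber_indicator (c : cube n -> bool * bool) (sx : bool * bool) :
  \sum_x ((c x == sx)%:R : R) = (fiber_card c sx)%:R.
Proof.
rewrite /fiber_card -sumr_const [RHS]big_mkcond /=; apply: eq_bigr => x _.
by rewrite inE; case: (c x == sx).
Qed.

Lemma fiber_pmf_is_cond_pmf (c : cube n -> bool * bool) : is_cond_pmf (fiber_pmf c).
Proof.
move=> sx; split.
  move=> k; rewrite /fiber_pmf; case: ifP => _; first by rewrite ler0n.
  by case: ifP => _ //; rewrite divr_ge0 // ler0n.
have [c0|c0] := eqVneq (fiber_card c sx) 0%N.
  have := @series_finite (fiber_pmf c sx) 1%N.
  by rewrite big_ord1 /fiber_pmf c0 eqxx /=; apply => -[].
have -> : (1 : R) = \sum_(k < ncube) fiber_pmf c sx k.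
  rewrite /fiber_pmf (negbTE c0).
  under eq_bigr => k _ do rewrite ltn_ord.
  rewrite -mulr_suml (sum_points (fun x => (c x == sx)%:R)) sum_fiber_indicator.
  by rewrite mulfV // pnatr_eq0.
by apply: series_finite => k kN; rewrite /fiber_pmf (negbTE c0) ltnNge kN.
Qed.

Lemma Ejoint_fiber (a beta : R) (c : cube n -> bool * bool) (S X Z : cube n -> R)
  (G : R -> R -> R -> R) :
  (forall sx, PSX a beta sx * 2%:R ^+ n = (fiber_card c sx)%:R) ->
  (forall x, Sval a (c x) = S x) -> (forall x, Xval R (c x) = X x) ->
  Ejoint a beta (atoms Z) (fiber_pmf c) G = Eunif (fun x => G (S x) (X x) (Z x)).
Proof.
move=> law cS cX.
rewrite /Ejoint /Eunif -/(mass R n) (partition_big c xpredT) //= mulr_sumr.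
apply: eq_bigr => sx _.
have -> : PSX a beta sx = (fiber_card c sx)%:R * mass R n.
  by rewrite -law -mulrA (mulrC (2%:R ^+ n)) mass_cube mulr1.
have [c0|c0] := eqVneq (fiber_card c sx) 0%N.
  rewrite c0 !mul0r big1 ?mulr0 // => x /eqP cx.
  by have := card0_eq c0 x; rewrite inE cx eqxx.
rewrite (@limn_series_finite _ ncube); last first.
  by move=> k kN; rewrite /fiber_pmf (negbTE c0) ltnNge kN mul0r.
pose H x := (c x == sx)%:R / (fiber_card c sx)%:R * G (Sval a sx) (Xval R sx) (Z x).
rewrite (eq_bigr (fun k : 'I_ncube => H (point k))) => [|k _]; last first.
  by rewrite /fiber_pmf (negbTE c0) ltn_ord.
rewrite sum_points !mulr_sumr [RHS]big_mkcond /=; apply: eq_bigr => x _.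
rewrite /H; have [cx|cx] /= := eqVneq (c x) sx; last by rewrite !(mul0r, mulr0).
rewrite -cS -cX cx; field; by rewrite pnatr_eq0.
Qed.

Lemma fiber_card_PSX (f xb : cube n -> bool) (a beta : R) :
  Eunif (boolR R f) = a -> Eunif (fun x => spm R (xb x)) = 0 ->
  Eunif (fun x => boolR R f x * spm R (xb x)) = beta ->
  forall sx, PSX a beta sx * 2%:R ^+ n = (fiber_card (fun x => (f x, xb x)) sx)%:R.
Proof.
move=> Ef EX EfX [s b]; rewrite -sum_fiber_indicator.
have indicatorE x : (((f x, xb x) == (s, b))%:R : R) =
    (if s then 0 else 1/2) + (if s then 1/2 else -(1/2)) * boolR R f x +
    (if s then 0 else spm R b / 2) * spm R (xb x) +
    (if s then spm R b / 2 else - (spm R b / 2)) * (boolR R f x * spm R (xb x)).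
  by rewrite /boolR /b01; case: (f x); case: (xb x); case: s; case: b; rewrite /spm /=; field.
rewrite (eq_bigr _ (fun x _ => indicatorE x)) !big_split /= -!mulr_sumr.
rewrite sum_cube_const !sum_cube_Eunif Ef EX EfX {indicatorE}.
by case: s; case: b; rewrite /PSX /spm /=; field.
Qed.

End FiniteLawAsPmf.

Arguments fiber_pmf {R n}.

Section StabilityWitness.
Variables (R : realType) (n : nat) (rho a : R) (f : {ffun cube n -> bool}) (i : 'I_n).
Hypotheses (rho01 : 0 < rho < 1) (mean_f : Eunif (boolR R f) = a)
  (i_max : maxabs_hat (boolR R f) = `|fhat1 (boolR R f) i|).

Let F : cube n -> R := boolR R f.
Let beta : R := maxabs_hat F.
Let xb (x : cube n) : bool := x i == (0 <= fhat1 F i).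
Let X (x : cube n) : R := spm R (xb x).
Let S (x : cube n) : R := F x - a.
Let Z (x : cube n) : R := Trho rho S x / rho.
Let label (x : cube n) : bool * bool := (f x, xb x).

Let rho_neq0 : rho != 0.
Proof. by case/andP: rho01 => /lt0r_neq0. Qed.

Lemma X_oriented (x : cube n) : X x = spm R (0 <= fhat1 F i) * spm R (x i).
Proof.
by rewrite /X /xb; case: (x i); case: (0 <= _); rewrite /spm /= ?mulrNN ?mul1r ?mulr1.
Qed.

Lemma Eunif_X : Eunif X = 0.
Proof. by rewrite (Eunif_ext X_oriented) EunifZ Eunif_spm mulr0. Qed.

Lemma oriented_coef : spm R (0 <= fhat1 F i) * fhat1 F i = beta.
Proof.
rewrite /beta i_max /spm.
by case: ifP => [/ger0_norm ->|/negbT]; rewrite ?mul1r // -ltNge => /ltr0_norm ->; rewrite mulN1r.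
Qed.

Lemma Eunif_FX : Eunif (fun x => F x * X x) = beta.
Proof.
rewrite -oriented_coef /fhat1 -EunifZ; apply: Eunif_ext => x.
by rewrite X_oriented mulrCA.
Qed.

Lemma label_law (sx : bool * bool) :
  PSX a beta sx * 2%:R ^+ n = (fiber_card label sx)%:R.
Proof. exact: fiber_card_PSX mean_f Eunif_X Eunif_FX sx. Qed.

Lemma beta_range : 0 <= beta <= Num.min a (1 - a).
Proof.
have P0 sx : 0 <= PSX a beta sx.
  by rewrite -(pmulr_lge0 _ (exprn_gt0 n (ltr0Sn R 1))) label_law ler0n.
have b0 : 0 <= beta by rewrite /beta i_max normr_ge0.
have := P0 (true, false); have := P0 (false, true); rewrite /PSX => ? ?.
by rewrite b0 le_min; apply/andP; split; lra.
Qed.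

Lemma Ejoint_witness (G : R -> R -> R -> R) :
  Ejoint a beta (atoms Z) (fiber_pmf label) G = Eunif (fun x => G (S x) (X x) (Z x)).
Proof.
apply: Ejoint_fiber => [sx|x|x] //; first exact: label_law.
by rewrite /label /Sval /S /F /boolR /b01 /=; case: (f x) => /=; ring.
Qed.

Lemma hat_S_empty : hat S (empty_set n) = 0.
Proof. by rewrite hat_empty EunifB Eunif_cst mean_f subrr. Qed.

Lemma hat_S_single (j : 'I_n) : hat S (single j) = fhat1 F j.
Proof.
rewrite /hat (Eunif_ext (k := fun x => F x * spm R (x j) - a * spm R (x j))).
  by rewrite EunifB EunifZ Eunif_spm mulr0 subr0.
by move=> x; rewrite chi_single /S mulrBl.
Qed.

Lemma Z_shift (x : cube n) : a + rho * Z x = Trho rho F x.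
Proof. by rewrite /Z /S Trho_subr; field. Qed.

Lemma Eunif_Z : Eunif Z = 0.
Proof.
rewrite (Eunif_ext (k := fun x => rho^-1 * Trho rho S x)); last by move=> x; rewrite mulrC.
by rewrite EunifZ -hat_empty hat_Trho hat_S_empty !mulr0.
Qed.

Lemma Eunif_XZ : Eunif (fun x => X x * Z x) = beta.
Proof.
pose c := spm R (0 <= fhat1 F i) / rho.
rewrite (Eunif_ext (k := fun x => c * (Trho rho S x * chi (single i) x))).
  rewrite EunifZ -/(hat _ _) hat_Trho hat_S_single /wgt degree_single expr1.
  by rewrite /c mulrA divfK // oriented_coef.
by move=> x; rewrite X_oriented chi_single /Z /c; ring.
Qed.

Lemma second_moment_Z :
  Eunif (fun x => Z x ^+ 2) <= (1 - rho) * W1 F + rho * Eunif (fun x => S x * Z x).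
Proof.
have r2 : 0 < rho ^+ 2 by case/andP: rho01 => r0 _; rewrite exprn_gt0.
rewrite (Eunif_ext (k := fun x => (rho ^+ 2)^-1 * Trho rho S x ^+ 2)); last first.
  by move=> x; rewrite /Z; field.
rewrite (Eunif_ext (h := fun x => S x * Z x) (k := fun x => rho^-1 * (S x * Trho rho S x))); last first.
  by move=> x; rewrite /Z; field.
rewrite !EunifZ mulrA mulfV // mul1r mulrC ler_pdivrMr // mulrC.
have -> : W1 F = \sum_j hat S (single j) ^+ 2.
  by apply: eq_bigr => j _; rewrite hat_S_single.
by apply: Trho_sq_level_one; [case/andP: rho01 => /ltW -> /ltW | exact: hat_S_empty].
Qed.

Lemma stability_witness (Phi : R -> R) (omega : R -> R -> R) :
  (forall a' beta' : R, W_defined n a' beta' -> Wn n a' beta' <= omega a' beta') ->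
  exists beta' (z p : bool * bool -> nat -> R), Ufeas rho omega a beta' z p /\
    Eunif (fun x => Phi (Trho rho F x)) = Ejoint a beta' z p (fun _ _ zz => Phi (a + rho * zz)).
Proof.
move=> omegaW; exists beta, (atoms Z), (fiber_pmf label); split; last first.
  by rewrite Ejoint_witness; apply: Eunif_ext => x; rewrite Z_shift.
have W1_le : W1 F <= omega a beta.
  have feas : Wfeas a beta f by rewrite /Wfeas mean_f !eqxx.
  by apply: le_trans (omegaW _ _ (ex_intro _ f feas)); exact: le_bigmax_cond.
split; [exact: beta_range | exact: fiber_pmf_is_cond_pmf |].
split; rewrite ?Ejoint_witness.
- move=> sx k _; rewrite /atoms Z_shift; apply: Trho_unit_interval.
    by case/andP: rho01 => r0 r1; apply/andP; split; lra.
  by move=> x; rewrite /F /boolR /b01; case: (f x); rewrite ?ler01 ?lexx.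
- exact: Eunif_Z.
- exact: Eunif_XZ.
- apply: le_trans second_moment_Z _; rewrite lerD2r ler_wpM2l //.
  by case/andP: rho01 => _ r1; rewrite subr_ge0 ltW.
Qed.

End StabilityWitness.

(* On the zero-dimensional cube every Boolean function has mean 0 or 1. *)
Lemma cube_dim_pos (R : realType) (n : nat) (f : cube n -> bool) (a : R) :
  Eunif (boolR R f) = a -> 0 < a < 1 -> (0 < n)%N.
Proof.
case: n f => // f; rewrite /Eunif expr0 invr1 mul1r.
have -> : \sum_(x : cube 0) boolR R f x = boolR R f (empty_set 0).
  rewrite -[RHS]mulr1 -(expr0 (2%:R : R)) -sum_cube_const.
  by apply: eq_bigr => x _; congr boolR; apply/ffunP => -[].
by rewrite /boolR /b01 => <-; case: (f _); rewrite ltxx ?andbF.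
Qed.

Theorem theorem3p4 (R : realType) (n : nat) (Phi : R -> R)
  (omega : R -> R -> R) (a rho : R) :
  {within `[0, 1], continuous Phi} ->
  (forall x y t : R, 0 <= x <= 1 -> 0 <= y <= 1 -> x != y -> 0 < t < 1 ->
     Phi (t * x + (1 - t) * y) < t * Phi x + (1 - t) * Phi y) ->
  (forall a' beta : R, W_defined n a' beta -> Wn n a' beta <= omega a' beta) ->
  0 < a < 1 -> 0 < rho < 1 ->
  (exists k : int, 2%:R ^+ n * a = k%:~R) ->
  (MaxStab n rho Phi a <= Upsilon rho Phi omega a)%E.
Proof.
move=> _ _ omegaW a01 rho01 _.
rewrite /MaxStab; apply: bigmax_le => [|f /eqP mean_f]; first exact: leNye.
have n_pos := cube_dim_pos mean_f a01.
have [i _ i_max] : {i | i \in xpredT & maxabs_hat (boolR R f) = `|fhat1 (boolR R f) i|}.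
  by apply: (eq_bigmax (Ordinal n_pos)) => // j _; exact: normr_ge0.
have [beta [z [p [feas ->]]]] := stability_witness rho01 mean_f i_max Phi omegaW.
by apply: ereal_sup_ubound; exists beta, z, p.
Qed.
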